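(* Let $(U,\mathcal{I})$ be a laminar matroid given by a laminar family $\mathcal{F}$ with positive integer capacities $\mu(\cdot)$ such that $\mu(B)<\mu(B')$ whenever $B\subsetneq B'$ are in $\mathcal{F}$. Let $f$ be non-negative, monotonically non-decreasing and submodular, $p\in(0,1)$, and run $\mathrm{SIMULATE}$ (see context) to obtain $M,N,w$. Let $$S=N\setminus\bigcup_{B\in\mathcal{F}:\,|N\cap B|>\mu(B)}(N\cap B),$$ i.e. all elements of $N\cap B$ are removed for every $B$ whose constraint is violated by $N$. Let $\beta=2e(1-p)$ and assume $\beta<1$. Then $$\mathbb{E}[w(S)]\ge\Big(1-\frac{2\beta}{(1-\beta)^3}\Big)\mathbb{E}[w(N)].$$
   Context: Laminar matroid: $\mathcal{F}$ is a family of distinct subsets of $U$ any two of which are disjoint or nested, and $\mathcal{I}=\{T\subseteq U:|T\cap B|\le\mu(B)\ \forall B\in\mathcal{F}\}$. Write $f_T(e)=f(T\cup\{e\})-f(T)$; $e$ in $\beta$ denotes the base of the natural logarithm. $\mathrm{SIMULATE}$: each element of $U$ is independently put into a set $H$ with probability $p$. Start with $M=N=\emptyset$. While there exists $e\in U\setminus(M\cup N)$ with $M\cup\{e\}\in\mathcal{I}$, take such an $e$ maximizing $f_M(e)$ (ties broken by a fixed rule); let $M_e$ be the current $M$; if $e\in H$ add $e$ to $M$, else to $N$. Define $w(e)=f_{M_e}(e)$ for $e\in M\cup N$, $w(e)=0$ otherwise, and $w(T)=\sum_{e\in T}w(e)$. *)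

From HB Require Import structures.
From mathcomp Require Import all_boot all_order all_algebra.
From mathcomp Require Import reals sequences.
Set Implicit Arguments. Unset Strict Implicit. Unset Printing Implicit Defensive.
Import Order.TTheory GRing.Theory Num.Theory.
Local Open Scope ring_scope.

Section Defs.
Variables (R : realType) (U : finType).

Definition laminar (F : {set {set U}}) : Prop :=
  forall A B, A \in F -> B \in F ->
    [disjoint A & B] \/ A \subset B \/ B \subset A.

Definition lam_indep (F : {set {set U}}) (mu : {set U} -> nat) (T : {set U}) : bool :=
  [forall B in F, #|T :&: B| <= mu B]%N.

Definition nonneg_fun (f : {set U} -> R) := forall A : {set U}, 0 <= f A.
Definition monotone_fun (f : {set U} -> R) := forall A B : {set U}, A \subset B -> f A <= f B.
Definition submodular (f : {set U} -> R) :=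
  forall A B : {set U}, f (A :|: B) + f (A :&: B) <= f A + f B.

Definition marg (f : {set U} -> R) (T : {set U}) (e : U) : R := f (e |: T) - f T.

Definition state := ({set U} * {set U} * {ffun U -> R})%type.

(* A tie-breaking rule: given the current M, N and the (nonempty) set of
   eligible maximizers, returns one of them. *)
Definition valid_tiebreak (tb : {set U} -> {set U} -> {set U} -> U) : Prop :=
  forall M N C, C != set0 -> tb M N C \in C.

(* One iteration of the while loop of SIMULATE, for a fixed sample H. *)
Definition sim_step F mu (f : {set U} -> R) tb (H : {set U}) (s : state) : state :=
  let: (M, N, w) := s in
  let C := [set e | (e \notin M :|: N) && lam_indep F mu (e |: M)] in
  if C == set0 then s else
  let Cmax := [set e in C | [forall e' in C, marg f M e' <= marg f M e]] in
  let e := tb M N Cmax in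
  let w' := [ffun x => if x == e then marg f M e else w x] in
  if e \in H then (e |: M, N, w') else (M, e |: N, w').

(* Each non-final iteration adds a new element to M :|: N, so #|U| iterations
   suffice to reach the end of the while loop. w is 0 outside M :|: N. *)
Definition simulate F mu f tb (H : {set U}) : state :=
  iter #|U| (sim_step F mu f tb H) (set0, set0, [ffun => 0]).

Definition sim_M F mu f tb H := (simulate F mu f tb H).1.1.
Definition sim_N F mu f tb H := (simulate F mu f tb H).1.2.
Definition sim_w F mu f tb H := (simulate F mu f tb H).2.

Definition wsum (w : {ffun U -> R}) (T : {set U}) : R := \sum_(e in T) w e.

Definition prune (F : {set {set U}}) (mu : {set U} -> nat) (N : {set U}) : {set U} :=
  N :\: \bigcup_(B in F | (mu B < #|N :&: B|)%N) (N :&: B).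

Definition Exp (p : R) (X : {set U} -> R) : R :=
  \sum_(H : {set U}) p ^+ #|H| * (1 - p) ^+ #|~: H| * X H.

End Defs.

From HB Require Import structures.
From mathcomp Require Import all_boot all_order all_algebra.
From mathcomp Require Import reals sequences exp.
From mathcomp Require Import zify ring lra.
Import Order.TTheory GRing.Theory Num.Theory.
Local Open Scope ring_scope.
Set Implicit Arguments. Unset Strict Implicit. Unset Printing Implicit Defensive.

(* Write eps = 1 - p, e2 = 2 eps and y = 1 / (1 - e2).  A set B of F that
   holds a elements of N and b elements of M is charged the penalty
   (w(N :&: B) + L) q(mu B + 1 - a, mu B - b), where L is the marginal gain
   of the next greedy pick and q(k, j) = e2^k y^j 'C(k + j - 1, k) satisfies
   p q(k, j - 1) + e2 q(k - 1, j) <= q(k, j) and q(0, j) >= 1.  Since gains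
   only decrease along the run, the potential c w(N) - sum_B penalty(B) is a
   submartingale as soon as every element e satisfies
   sum_(B in F | e \in B) q(mu B + 1, mu B) <= c eps: the picked element
   enters N with probability eps and adds c L to c w(N), which pays for the
   penalties it switches on.  Laminarity and strictly increasing capacities
   make the capacities of the sets containing e distinct, so this sum is
   dominated by a geometric series, which is at most c eps for
   c = 2 beta / (1 - beta)^3 when beta <= 1/4.  The potential starts at 0 and
   every violated set ends with penalty at least w(N :&: B), so
   w(S) >= (1 - c) w(N) + potential pointwise; taking expectations gives the
   claim.  For beta > 1/4 the factor 1 - c is not positive. *)

Section Greedy.
Variables (R : realType) (U : finType) (F : {set {set U}})
  (mu : {set U} -> nat) (f : {set U} -> R)
  (tb : {set U} -> {set U} -> {set U} -> U).
Hypothesis tbV : valid_tiebreak tb.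
Hypothesis f_mono : monotone_fun f.
Hypothesis f_sub : submodular f.

Local Notation step H := (sim_step F mu f tb H).

Definition candidates (M N : {set U}) :=
  [set e | (e \notin M :|: N) && lam_indep F mu (e |: M)].
Definition best_candidates M N := [set e in candidates M N |
  [forall e' in candidates M N, marg f M e' <= marg f M e]].
Definition greedy_pick M N := tb M N (best_candidates M N).
Definition pick_weight M N (w : {ffun U -> R}) : {ffun U -> R} :=
  [ffun x => if x == greedy_pick M N then marg f M (greedy_pick M N) else w x].

Lemma sim_stepE (H M N : {set U}) (w : {ffun U -> R}) : step H (M, N, w) =
  if candidates M N == set0 then (M, N, w)
  else if greedy_pick M N \in H then (greedy_pick M N |: M, N, pick_weight M N w)
  else (M, greedy_pick M N |: N, pick_weight M N w).
Proof. by []. Qed.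

Lemma best_candidates_neq0 (M N : {set U}) :
  candidates M N != set0 -> best_candidates M N != set0.
Proof.
case/set0Pn => e0 He0.
case: (@arg_maxP _ R _ e0 (mem (candidates M N)) (marg f M)) => // e He Hmax.
apply/set0Pn; exists e; rewrite inE; apply/andP; split=> //.
by apply/forall_inP => e' He'; apply: Hmax.
Qed.

Lemma greedy_pickP (M N : {set U}) : candidates M N != set0 ->
  [/\ greedy_pick M N \notin M :|: N, lam_indep F mu (greedy_pick M N |: M) &
      forall e, e \in candidates M N -> marg f M e <= marg f M (greedy_pick M N)].
Proof.
move=> HC; have := tbV M N (best_candidates_neq0 HC).
rewrite inE => /andP[]; rewrite inE => /andP[H1 H2] /forall_inP H3.
by split=> // e He; apply: H3.
Qed.

Lemma marg_ge0 (M : {set U}) (e : U) : 0 <= marg f M e.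
Proof. by rewrite /marg subr_ge0 f_mono // subsetUr. Qed.

Lemma marg_antitone (M M' : {set U}) (e : U) :
  M \subset M' -> marg f M' e <= marg f M e.
Proof.
move=> sMM'; have [eM'|eM'] := boolP (e \in M').
  by rewrite /marg (setUidPr _) ?sub1set // subrr marg_ge0.
have := f_sub (e |: M) M'.
rewrite -setUA (setUidPr sMM') setIUl (setIidPl sMM').
rewrite (_ : [set e] :&: M' = set0) ?set0U; last first.
  by apply/setP => x; rewrite !inE; case: eqP => // ->; rewrite (negbTE eM').
by rewrite /marg; lra.
Qed.

Lemma lam_indepS (T T' : {set U}) :
  T \subset T' -> lam_indep F mu T' -> lam_indep F mu T.
Proof.
move=> sTT' /forall_inP H; apply/forall_inP => B HB.
by apply: leq_trans (H B HB); apply/subset_leq_card/setSI.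
Qed.

Lemma candidates_antitone (M N M' N' : {set U}) :
  M \subset M' -> M :|: N \subset M' :|: N' ->
  candidates M' N' \subset candidates M N.
Proof.
move=> sM sMN; apply/subsetP => x; rewrite [x \in _]inE => /andP[H1 H2].
rewrite inE (contra (subsetP sMN x) H1) /=.
exact: lam_indepS (setUS _ sM) H2.
Qed.

Definition next_gain (s : state R U) : R :=
  let: (M, N, _) := s in
  if candidates M N == set0 then 0 else marg f M (greedy_pick M N).

Lemma next_gain_ge0 s : 0 <= next_gain s.
Proof. by case: s => [[M N] w] /=; case: ifP => // _; exact: marg_ge0. Qed.

Lemma next_gain_antitone (M N M' N' : {set U}) (w w' : {ffun U -> R}) :
  candidates M N != set0 -> M \subset M' -> M :|: N \subset M' :|: N' ->
  next_gain (M', N', w') <= next_gain (M, N, w).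
Proof.
move=> HC sM sMN /=; rewrite (negbTE HC).
case: ifP => HC'; first exact: marg_ge0.
have [_ _ Hmax] := greedy_pickP HC.
have [H1 H2 _] := greedy_pickP (negbT HC').
apply: le_trans (marg_antitone _ sM) (Hmax _ _).
by apply: (subsetP (candidates_antitone sM sMN)); rewrite inE H1.
Qed.

Definition decided (s : state R U) := s.1.1 :|: s.1.2.

Lemma decided_step (H : {set U}) (s : state R U) :
  decided s \subset decided (step H s).
Proof.
case: s => [[M N] w]; rewrite sim_stepE; case: ifP => _ //.
by case: ifP => _; apply/subsetP => x; rewrite /decided /= !inE => /orP[]->;
  rewrite ?orbT.
Qed.

Lemma iter_step_agree k (s : state R U) (H H' : {set U}) :
  {in [predC decided s], H =i H'} -> iter k (step H) s = iter k (step H') s.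
Proof.
elim: k s => [//|k IH] [[M N] w] HH'; rewrite !iterSr.
have -> : step H (M, N, w) = step H' (M, N, w).
  rewrite !sim_stepE; case: ifP => // HC.
  by have [Hpick _ _] := greedy_pickP (negbT HC); rewrite HH'.
apply: IH => x Hx; apply: HH'.
by apply: contra Hx; apply: (subsetP (decided_step H' _)).
Qed.

Lemma pick_weight_ge0 (M N : {set U}) (w : {ffun U -> R}) :
  (forall x, 0 <= w x) -> forall x, 0 <= pick_weight M N w x.
Proof. by move=> w0 x; rewrite ffunE; case: ifP => _ //; exact: marg_ge0. Qed.

Lemma iter_step_weight_ge0 k (H : {set U}) (s : state R U) :
  (forall x, 0 <= s.2 x) -> forall x, 0 <= (iter k (step H) s).2 x.
Proof.
elim: k => [//|k IH] w0; rewrite iterS.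
case: (iter k _ _) (IH w0) => [[M N] w] {}w0.
by rewrite sim_stepE; case: ifP => // _; case: ifP => _; exact: pick_weight_ge0.
Qed.

Lemma sim_w_ge0 (H : {set U}) x : 0 <= sim_w F mu f tb H x.
Proof. by apply: iter_step_weight_ge0 => y; rewrite ffunE. Qed.

End Greedy.

Arguments next_gain : simpl never.

Section ViolationBound.
Variables (R : realType) (p e2 y : R).
Hypotheses (p_ge0 : 0 <= p) (e2_ge0 : 0 <= e2) (y_ge1 : 1 <= y)
  (py_le_y : p + e2 * y <= y).

(* A supersolution of [q (k, j.+1) >= p q (k, j) + e2 q (k - 1, j.+1)] with
   [q (0, j) >= 1]: it dominates the risk that a set which needs [k] more
   elements of N and still has [j] free slots for M ends up violated. *)
Definition viol_bound (k j : nat) : R := e2 ^+ k * y ^+ j * 'C(k + j - 1, k)%:R.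

Lemma viol_bound_ge0 k j : 0 <= viol_bound k j.
Proof. by rewrite /viol_bound !mulr_ge0 ?exprn_ge0 // (le_trans ler01 y_ge1). Qed.

Lemma viol_bound0_ge1 j : 1 <= viol_bound 0 j.
Proof. by rewrite /viol_bound expr0 mul1r bin0 mulr1 exprn_ege1. Qed.

Lemma viol_bound_super k j :
  p * viol_bound k j + e2 * viol_bound k.-1 j.+1 <= viol_bound k j.+1.
Proof.
have y_ge0 : 0 <= y := le_trans ler01 y_ge1.
rewrite /viol_bound; case: k => [|k] /=.
  rewrite !expr0 !mul1r !bin0 !mulr1.
  have -> : p * y ^+ j + e2 * y ^+ j.+1 = (p + e2 * y) * y ^+ j.
    by rewrite exprS; ring.
  by rewrite [y ^+ j.+1]exprS ler_wpM2r ?exprn_ge0.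
rewrite (_ : k.+1 + j - 1 = k + j)%N; last by lia.
rewrite (_ : k + j.+1 - 1 = k + j)%N; last by lia.
rewrite (_ : k.+1 + j.+1 - 1 = (k + j).+1)%N; last by lia.
rewrite binS natrD.
have -> : e2 ^+ k.+1 * y ^+ j.+1 * ('C(k + j, k.+1)%:R + 'C(k + j, k)%:R) =
    y * (e2 ^+ k.+1 * y ^+ j * 'C(k + j, k.+1)%:R)
    + e2 * (e2 ^+ k * y ^+ j.+1 * 'C(k + j, k)%:R).
  by rewrite !exprS; ring.
rewrite lerD2r ler_wpM2r ?mulr_ge0 ?exprn_ge0 //.
by apply: le_trans py_le_y; rewrite lerDl mulr_ge0.
Qed.

(* The bound for a set of capacity [m] containing [a] elements of N and
   [b] elements of M. *)
Definition cap_viol_bound (m a b : nat) : R := viol_bound (m.+1 - a) (m - b).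

Lemma cap_viol_bound_ge0 m a b : 0 <= cap_viol_bound m a b.
Proof. exact: viol_bound_ge0. Qed.

Lemma cap_viol_bound_super m a b : (b < m)%N ->
  p * cap_viol_bound m a b.+1 + e2 * cap_viol_bound m a.+1 b
  <= cap_viol_bound m a b.
Proof.
move=> lt_bm; rewrite /cap_viol_bound.
rewrite (_ : m - b = (m - b.+1).+1)%N; last by lia.
rewrite (_ : m.+1 - a.+1 = (m.+1 - a).-1)%N; last by lia.
exact: viol_bound_super.
Qed.

Lemma cap_viol_bound_violated m a b : (m < a)%N -> 1 <= cap_viol_bound m a b.
Proof.
move=> lt_ma; rewrite /cap_viol_bound (eqP _ : m.+1 - a = 0)%N ?subn_eq0 //.
exact: viol_bound0_ge1.
Qed.

End ViolationBound.

Section Expectation.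
Variables (R : realType) (U : finType) (p : R).

Definition set_prob (H : {set U}) : R := p ^+ #|H| * (1 - p) ^+ #|~: H|.

Lemma ExpE (X : {set U} -> R) : Exp p X = \sum_(H : {set U}) set_prob H * X H.
Proof. by []. Qed.

Lemma Exp_ext (X Y : {set U} -> R) : X =1 Y -> Exp p X = Exp p Y.
Proof. by move=> XY; apply: eq_bigr => H _; rewrite XY. Qed.

Lemma Exp_affine (a : R) (X Y : {set U} -> R) :
  Exp p (fun H => a * X H + Y H) = a * Exp p X + Exp p Y.
Proof. by rewrite !ExpE mulr_sumr -big_split; apply: eq_bigr => H _ /=; ring. Qed.

Lemma set_prob_setU1 (e : U) (K : {set U}) :
  e \notin K -> (1 - p) * set_prob (e |: K) = p * set_prob K.
Proof.
move=> eK; have := cardsC K; have := cardsC (e |: K).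
rewrite /set_prob cardsU1 eK add1n => cC1 cC.
rewrite (_ : #|~: K| = #|~: (e |: K)|.+1); last by lia.
by rewrite !exprS; ring.
Qed.

Section Condition.
Variable e : U.

Definition indep_of_mem (Z : {set U} -> R) :=
  forall K : {set U}, e \notin K -> Z (e |: K) = Z K.

Lemma sum_set_prob_mem (Z : {set U} -> R) : indep_of_mem Z ->
  \sum_(H : {set U} | e \in H) set_prob H * Z H
  = p * \sum_(H : {set U}) set_prob H * Z H.
Proof.
move=> Zindep; rewrite [in RHS](bigID (fun H : {set U} => e \in H)) /=.
set A := \sum_(H : {set U} | e \in H) _; set B := \sum_(H : {set U} | e \notin H) _.
suff AB : (1 - p) * A = p * B by rewrite mulrDr -AB; ring.
rewrite /A (reindex_onto (fun K => e |: K) (fun H => H :\ e)) /=; last first.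
  by move=> H eH; rewrite setD1K.
have DU1 K : ((e |: K) :\ e == K) = (e \notin K).
  apply/eqP/idP => [<-|/setU1K //]; by rewrite !inE eqxx.
rewrite !mulr_sumr; apply: eq_big => K; first by rewrite setU11 DU1.
move=> /andP[_]; rewrite DU1 => eK; rewrite Zindep //.
transitivity ((1 - p) * set_prob (e |: K) * Z K); first by ring.
by rewrite set_prob_setU1 // mulrA.
Qed.

Lemma sum_set_prob_notin (Z : {set U} -> R) : indep_of_mem Z ->
  \sum_(H : {set U} | e \notin H) set_prob H * Z H
  = (1 - p) * \sum_(H : {set U}) set_prob H * Z H.
Proof.
move=> Zindep; have := sum_set_prob_mem Zindep.
have -> : \sum_(H : {set U}) set_prob H * Z H =
    \sum_(H : {set U} | e \in H) set_prob H * Z H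
    + \sum_(H : {set U} | e \notin H) set_prob H * Z H.
  by rewrite (bigID (fun H : {set U} => e \in H)).
move: (\sum_(H | _) _) (\sum_(H | _) _) => a b ab.
by rewrite mulrBl mul1r -ab; ring.
Qed.

Lemma Exp_ifmem (Y1 Y2 : {set U} -> R) : indep_of_mem Y1 -> indep_of_mem Y2 ->
  Exp p (fun H => if e \in H then Y1 H else Y2 H)
  = p * Exp p Y1 + (1 - p) * Exp p Y2.
Proof.
move=> Y1indep Y2indep; rewrite !ExpE (bigID (fun H : {set U} => e \in H)) /=.
rewrite (eq_bigr (fun H => set_prob H * Y1 H)) => [|H -> //].
rewrite [X in _ + X](eq_bigr (fun H => set_prob H * Y2 H)) => [|H /negbTE -> //].
by rewrite sum_set_prob_mem // sum_set_prob_notin.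
Qed.

End Condition.

Hypothesis p01 : 0 <= p <= 1.

Lemma set_prob_ge0 (H : {set U}) : 0 <= set_prob H.
Proof. by case/andP: p01 => p0 p1; rewrite mulr_ge0 ?exprn_ge0 ?subr_ge0. Qed.

Lemma ler_Exp (X Y : {set U} -> R) : (forall H, X H <= Y H) -> Exp p X <= Exp p Y.
Proof. by move=> XY; apply: ler_sum => H _; rewrite ler_wpM2l ?set_prob_ge0. Qed.

Lemma Exp_ge0 (X : {set U} -> R) : (forall H, 0 <= X H) -> 0 <= Exp p X.
Proof. by move=> X0; apply: sumr_ge0 => H _; rewrite mulr_ge0 ?set_prob_ge0. Qed.

End Expectation.

Lemma setU1I_mem (T : finType) (e : T) (A B : {set T}) :
  e \in B -> (e |: A) :&: B = e |: (A :&: B).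
Proof. by move=> eB; rewrite setIUl (setIidPl _) // sub1set. Qed.

Lemma setU1I_notmem (T : finType) (e : T) (A B : {set T}) :
  e \notin B -> (e |: A) :&: B = A :&: B.
Proof.
move=> eB; rewrite setIUl (_ : [set e] :&: B = set0) ?set0U //.
by apply/setP => x; rewrite !inE; case: eqP => // ->; rewrite (negbTE eB).
Qed.

Lemma sum_bigcup_le (R : realType) (T I : finType) (P : pred I)
    (A : I -> {set T}) (w : T -> R) : (forall x, 0 <= w x) ->
  \sum_(x in \bigcup_(i | P i) A i) w x <= \sum_(i | P i) \sum_(x in A i) w x.
Proof.
move=> w0; rewrite (eq_bigr (fun i => \sum_x (if x \in A i then w x else 0)));
  last by move=> i _; rewrite big_mkcond.
rewrite big_mkcond exchange_big /=; apply: ler_sum => x _.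
case: ifP => [/bigcupP[i0 Pi0 xAi0]|_]; last by apply: sumr_ge0 => i _; case: ifP.
rewrite (bigD1 i0) //= xAi0 -[X in X <= _]addr0 lerD2l.
by apply: sumr_ge0 => i _; case: ifP.
Qed.

Section Potential.
Variables (R : realType) (U : finType) (F : {set {set U}})
  (mu : {set U} -> nat) (f : {set U} -> R)
  (tb : {set U} -> {set U} -> {set U} -> U) (p : R).
Hypothesis tbV : valid_tiebreak tb.
Hypothesis f_mono : monotone_fun f.
Hypothesis f_sub : submodular f.
Hypotheses (p_lt1 : p < 1) (e2_lt1 : 2 * (1 - p) < 1).

Local Notation eps := (1 - p).
Local Notation e2 := (2 * (1 - p)).
Local Notation q := (cap_viol_bound e2 (1 - 2 * (1 - p))^-1).
Local Notation next_gain := (next_gain F mu f tb).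
Local Notation step H := (sim_step F mu f tb H).

Lemma eps_ge0 : 0 <= eps. Proof. by rewrite subr_ge0 ltW. Qed.

Lemma p_ge0 : 0 <= p. Proof. by move: e2_lt1; lra. Qed.

Lemma viol_bound_hyps :
  [/\ 0 <= e2, 1 <= (1 - e2)^-1 & p + e2 * (1 - e2)^-1 <= (1 - e2)^-1].
Proof.
have e2_ge0 : 0 <= e2 by rewrite mulr_ge0 ?eps_ge0.
have lt0_1e2 : 0 < 1 - e2 by rewrite subr_gt0.
split=> //; first by rewrite invf_ge1 // lerBlDr lerDl.
have : (1 - e2) * (1 - e2)^-1 = 1 by rewrite mulfV ?gt_eqF.
rewrite mulrBl mul1r; move: (e2 * _) p_lt1 => t; lra.
Qed.

Lemma q_ge0 m a b : 0 <= q m a b.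
Proof. by have [? ? _] := viol_bound_hyps; exact: cap_viol_bound_ge0. Qed.

(* A set's penalty is switched on only once the greedy picks one of its
   elements; that creation cost is what the budget hypothesis below pays for. *)
Definition penalty (B : {set U}) (s : state R U) : R :=
  let: (M, N, w) := s in
  if (#|M :&: B| + #|N :&: B| == 0)%N then 0
  else (wsum w (N :&: B) + next_gain s) * q (mu B) #|N :&: B| #|M :&: B|.

Definition potential (c : R) (s : state R U) : R :=
  c * wsum s.2 s.1.2 - \sum_(B in F) penalty B s.

Section Step.
Variables (M N : {set U}) (w : {ffun U -> R}).
Hypotheses (w_ge0 : forall x, 0 <= w x) (HC : candidates F mu M N != set0).

Local Notation e := (greedy_pick F mu f tb M N).
Local Notation w' := (pick_weight F mu f tb M N w).
Local Notation L := (next_gain (M, N, w)).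
Local Notation sM := (e |: M, N, w').
Local Notation sN := (M, e |: N, w').

Lemma pick_notin_M : e \notin M.
Proof.
by have [eMN _ _] := greedy_pickP f tbV HC; apply: contra eMN; rewrite inE => ->.
Qed.

Lemma pick_notin_N : e \notin N.
Proof.
have [eMN _ _] := greedy_pickP f tbV HC.
by apply: contra eMN; rewrite inE orbC => ->.
Qed.

Lemma pick_weight_pick : w' e = L.
Proof. by rewrite ffunE eqxx /next_gain /= (negbTE HC). Qed.

Lemma wsum_pick_weight (A : {set U}) : e \notin A -> wsum w' A = wsum w A.
Proof.
move=> eA; apply: eq_bigr => x xA; rewrite ffunE; case: eqP => // xe.
by rewrite -xe xA in eA.
Qed.

Lemma wsum_pick_weight_setU1 (A : {set U}) :
  e \notin A -> wsum w' (e |: A) = L + wsum w A.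
Proof.
by move=> eA; rewrite -wsum_pick_weight // /wsum big_setU1 //= pick_weight_pick.
Qed.

Lemma next_gain_succ_le : next_gain sM <= L /\ next_gain sN <= L.
Proof.
split; apply: next_gain_antitone => //; first exact: subsetUr.
  exact/setSU/subsetUr.
exact/setUS/subsetUr.
Qed.

Lemma penalty_step_notmem (B : {set U}) : e \notin B ->
  p * penalty B sM + eps * penalty B sN <= penalty B (M, N, w).
Proof.
move=> eB; rewrite /penalty !setU1I_notmem // wsum_pick_weight; last first.
  by rewrite inE negb_and pick_notin_N.
case: ifP => _; first by rewrite !mulr0 addr0.
have [gM gN] := next_gain_succ_le.
set W := wsum w _; set q0 := q _ _ _.
apply: le_trans (_ : p * ((W + L) * q0) + eps * ((W + L) * q0) <= _).
  by rewrite lerD // ler_wpM2l ?p_ge0 ?eps_ge0 // ler_wpM2r ?q_ge0 // lerD2l.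
by rewrite -mulrDl addrC subrK mul1r.
Qed.

Lemma penalty_step_mem (B : {set U}) : B \in F -> e \in B ->
  p * penalty B sM + eps * penalty B sN
  <= penalty B (M, N, w) + L * q (mu B) 0 0.
Proof.
move=> FB eB.
have eNB : e \notin N :&: B by rewrite inE negb_and pick_notin_N.
have eMB : e \notin M :&: B by rewrite inE negb_and pick_notin_M.
have lt_bm : (#|M :&: B| < mu B)%N.
  have [_ /forall_inP indep _] := greedy_pickP f tbV HC.
  by have := indep B FB; rewrite setU1I_mem // cardsU1 eMB.
rewrite /penalty !setU1I_mem // !cardsU1 eMB eNB !add1n addnS addSn /=.
rewrite wsum_pick_weight_setU1 // wsum_pick_weight //.
set a := #|N :&: B|; set b := #|M :&: B|; set W := wsum w (N :&: B).
have W_ge0 : 0 <= W by apply: sumr_ge0.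
have L_ge0 : 0 <= L := next_gain_ge0 F mu tb f_mono (M, N, w).
have [gM gN] := next_gain_succ_le.
have mix : p * ((W + next_gain sM) * q (mu B) a b.+1)
    + eps * ((L + W + next_gain sN) * q (mu B) a.+1 b) <= (W + L) * q (mu B) a b.
  have [e2_ge0 y_ge1 py_le] := viol_bound_hyps.
  apply: le_trans (_ : (W + L) * (p * q (mu B) a b.+1 + e2 * q (mu B) a.+1 b) <= _);
    last by rewrite ler_wpM2l ?addr_ge0 // (cap_viol_bound_super p_ge0).
  rewrite (mulrDr (W + L)); apply: lerD.
    rewrite mulrCA; apply: ler_wpM2r; first by rewrite mulr_ge0 ?p_ge0 ?q_ge0.
    by rewrite lerD2l.
  rewrite (_ : (W + L) * (e2 * _) = eps * (2 * (W + L) * q (mu B) a.+1 b));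
    last by ring.
  apply: ler_wpM2l; first exact: eps_ge0.
  apply: ler_wpM2r; first exact: q_ge0.
  by move: W_ge0 gN; lra.
case: ifP => [/eqP ab0|_]; last first.
  rewrite -[X in X <= _]addr0; apply: lerD; first exact: mix.
  by rewrite mulr_ge0 ?q_ge0.
have a0 : a = 0%N by lia.
have b0 : b = 0%N by lia.
suff W0 : W = 0 by move: mix; rewrite add0r W0 a0 b0 !add0r mulrC.
by rewrite /W /wsum (cards0_eq a0) big_set0.
Qed.

Lemma penalty_sum_step :
  p * \sum_(B in F) penalty B sM + eps * \sum_(B in F) penalty B sN
  <= \sum_(B in F) penalty B (M, N, w) + L * \sum_(B in F | e \in B) q (mu B) 0 0.
Proof.
rewrite !mulr_sumr -big_split /= big_mkcondr /= -big_split /=.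
apply: ler_sum => B FB; have [eB|eB] := boolP (e \in B).
  exact: penalty_step_mem.
by rewrite addr0; exact: penalty_step_notmem.
Qed.

Lemma potential_step c : \sum_(B in F | e \in B) q (mu B) 0 0 <= c * eps ->
  potential c (M, N, w) <= p * potential c sM + eps * potential c sN.
Proof.
move=> budget; rewrite /potential /= wsum_pick_weight ?pick_notin_N //.
rewrite wsum_pick_weight_setU1 ?pick_notin_N //.
have L_ge0 : 0 <= L := next_gain_ge0 F mu tb f_mono (M, N, w).
have := ler_wpM2l L_ge0 budget; have := penalty_sum_step.
move: (\sum_(B in F) _) (\sum_(B in F) _) (\sum_(B in F) _) => S SN SM.
move: (\sum_(B in F | _) _) L (wsum w N) => Q L' W hS hQ.
have -> : p * (c * W - SM) + eps * (c * (L' + W) - SN)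
  = c * W + L' * (c * eps) - (p * SM + eps * SN) by ring.
by move: (p * SM + eps * SN) (L' * Q) (L' * (c * eps)) hS hQ => X LQ Lce; lra.
Qed.

End Step.

Lemma penalty_ge0 (B : {set U}) (s : state R U) :
  (forall x, 0 <= s.2 x) -> 0 <= penalty B s.
Proof.
case: s => [[M N] w] /= w_ge0; case: ifP => // _.
by rewrite mulr_ge0 ?q_ge0 ?addr_ge0 ?next_gain_ge0 ?sumr_ge0.
Qed.

Lemma penalty_violated (B M N : {set U}) (w : {ffun U -> R}) :
  (forall x, 0 <= w x) -> (mu B < #|N :&: B|)%N ->
  wsum w (N :&: B) <= penalty B (M, N, w).
Proof.
move=> w_ge0 viol; rewrite /= ifF; last by apply/negbTE; move: viol; lia.
have [_ y_ge1 _] := viol_bound_hyps.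
rewrite -[X in X <= _]mulr1; apply: ler_pM; rewrite ?sumr_ge0 //.
  by rewrite lerDl next_gain_ge0.
exact: cap_viol_bound_violated.
Qed.

Lemma potential_prune c (M N : {set U}) (w : {ffun U -> R}) :
  (forall x, 0 <= w x) ->
  (1 - c) * wsum w N + potential c (M, N, w) <= wsum w (prune F mu N).
Proof.
move=> w_ge0.
set X := \bigcup_(B in F | (mu B < #|N :&: B|)%N) (N :&: B).
have XN : X \subset N by apply/bigcupsP => B _; exact: subsetIl.
have wsumN : wsum w N = wsum w X + wsum w (prune F mu N).
  by rewrite /wsum /prune (big_setID X) (setIidPr XN).
have wsumX : wsum w X <= \sum_(B in F) penalty B (M, N, w).
  apply: le_trans (sum_bigcup_le _ _ w_ge0) _.
  rewrite [X in _ <= X](bigID (fun B => mu B < #|N :&: B|)%N) -[X in X <= _]addr0.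
  apply: lerD; first by apply: ler_sum => B /andP[_ viol]; exact: penalty_violated.
  by apply: sumr_ge0 => B _; apply: penalty_ge0.
rewrite /potential /= wsumN.
move: (wsum w X) (wsum w (prune F mu N)) (\sum_(B in F) _) wsumX => a b S aS.
have -> : (1 - c) * (a + b) + (c * (a + b) - S) = a + b - S by ring.
by lra.
Qed.

Variable c : R.
Hypothesis budget : forall e : U, \sum_(B in F | e \in B) q (mu B) 0 0 <= c * eps.

Lemma Exp_potential_iter k (s : state R U) : (forall x, 0 <= s.2 x) ->
  potential c s * Exp p (fun _ : {set U} => 1)
  <= Exp p (fun H => potential c (iter k (step H) s)).
Proof.
have p01 : 0 <= p <= 1 by rewrite p_ge0 ltW.
have Exp1_ge0 : 0 <= Exp p (fun _ : {set U} => 1) by apply: Exp_ge0.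
elim: k s => [|k IH] [[M N] w] w_ge0.
  by rewrite !ExpE mulr_sumr; apply: ler_sum => H _; rewrite mulr1 mulrC.
rewrite [X in _ <= X](Exp_ext p
    (Y := fun H => potential c (iter k (step H) (step H (M, N, w)))));
  last by move=> H; cbv beta; rewrite iterSr.
have [HC|HC] := eqVneq (candidates F mu M N) set0.
  rewrite [X in _ <= X](Exp_ext p
    (Y := fun H => potential c (iter k (step H) (M, N, w)))) ?IH //.
  by move=> H; cbv beta; rewrite sim_stepE HC eqxx.
set e := greedy_pick F mu f tb M N; set w' := pick_weight F mu f tb M N w.
set sM := (e |: M, N, w'); set sN := (M, e |: N, w').
rewrite [X in _ <= X](Exp_ext p (Y := fun H =>
    if e \in H then potential c (iter k (step H) sM)
    else potential c (iter k (step H) sN))); last first.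
  by move=> H; cbv beta; rewrite sim_stepE (negbTE HC); case: (e \in H).
have indep s' : e \in decided s' ->
    indep_of_mem e (fun H => potential c (iter k (step H) s')).
  move=> e_dec K eK; congr (potential c _); apply: iter_step_agree => // x.
  move=> x_undec; rewrite in_setU1; case: eqP => // xe.
  by move: x_undec; rewrite xe inE e_dec.
rewrite Exp_ifmem; first last.
- by apply: indep; rewrite /decided !inE eqxx orbT.
- by apply: indep; rewrite /decided !inE eqxx.
have w'_ge0 := pick_weight_ge0 F mu tb f_mono M N w_ge0.
apply: le_trans (_ : (p * potential c sM + eps * potential c sN)
                     * Exp p (fun _ : {set U} => 1) <= _).
  by rewrite ler_wpM2r // potential_step.
rewrite mulrDl -!mulrA; apply: lerD.
  by apply: ler_wpM2l; [exact: p_ge0 | exact: IH].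
by apply: ler_wpM2l; [exact: eps_ge0 | exact: IH].
Qed.

Lemma potential_init : potential c (set0, set0, [ffun => 0]) = 0.
Proof.
rewrite /potential /= /wsum big_set0 mulr0 sub0r big1 ?oppr0 // => B _.
by rewrite /penalty !set0I cards0.
Qed.

Lemma Exp_wsum_prune_ge :
  (1 - c) * Exp p (fun H => wsum (sim_w F mu f tb H) (sim_N F mu f tb H))
  <= Exp p (fun H => wsum (sim_w F mu f tb H) (prune F mu (sim_N F mu f tb H))).
Proof.
have p01 : 0 <= p <= 1 by rewrite p_ge0 ltW.
have init_ge0 : forall x, 0 <= ((set0, set0, [ffun => 0]) : state R U).2 x.
  by move=> x; rewrite ffunE.
have pointwise H : (1 - c) * wsum (sim_w F mu f tb H) (sim_N F mu f tb H)
    + potential c (simulate F mu f tb H)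
    <= wsum (sim_w F mu f tb H) (prune F mu (sim_N F mu f tb H)).
  have := sim_w_ge0 F mu tb f_mono H; rewrite /sim_w /sim_N.
  by case: (simulate F mu f tb H) => [[M N] w] /= w_ge0; exact: potential_prune.
apply: le_trans (ler_Exp p01 pointwise).
rewrite Exp_affine -[X in X <= _]addr0 lerD2l.
by have := Exp_potential_iter #|U| init_ge0; rewrite potential_init mul0r.
Qed.

End Potential.

Lemma bin_double_le_exp4 i : ('C((i + i).+2, i.+2) <= 4 ^ i)%N.
Proof.
elim: i => [//|i IH]; set m := i.+1.
have e1 := mul_bin_diag ((m + m).+2) m.+1.
have e2 := mul_bin_diag ((m + m).+1) m.
have e3 := mul_bin_left (m + m) m.
rewrite /= (_ : (m + m) - m = m)%N in e1 e2 e3; last by lia.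
have : ('C((m + m).+2, m.+2) <= 4 * 'C(m + m, m.+1))%N.
  move: e1 e2 e3 (ltn0Sn i).
  move: 'C((m + m).+2, m.+2) 'C((m + m).+1, m.+1) 'C(m + m, m) 'C(m + m, m.+1).
  by move=> C' D C0 C1; nia.
move/leq_trans; apply; rewrite (_ : m + m = (i + i).+2)%N; last by lia.
by rewrite expnS leq_mul2l.
Qed.

Lemma geom_sum_le (R : realFieldType) (r : R) n : 0 <= r -> r < 1 ->
  \sum_(i < n) r ^+ i <= (1 - r)^-1.
Proof.
move=> r_ge0 r_lt1; have r1_neq0 : 1 - r != 0 by rewrite subr_eq0 gt_eqF.
have sum_eq : (1 - r) * \sum_(i < n) r ^+ i = 1 - r ^+ n.
  by rewrite -opprB mulNr -subrX1 opprB.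
rewrite -(mulKf r1_neq0 (\sum_(i < n) r ^+ i)) sum_eq -[X in _ <= X]mulr1.
apply: ler_wpM2l; first by rewrite invr_ge0 subr_ge0 ltW.
by rewrite lerBlDr lerDl exprn_ge0.
Qed.

Section LaminarChain.
Variables (U : finType) (F : {set {set U}}) (mu : {set U} -> nat).
Hypothesis F_laminar : laminar F.
Hypothesis mu_incr :
  forall B B', B \in F -> B' \in F -> B \proper B' -> (mu B < mu B')%N.

Lemma laminar_chain_mu_inj (e : U) :
  {in [pred B | (B \in F) && (e \in B)] &, injective mu}.
Proof.
move=> B B' /andP[FB eB] /andP[FB' eB'] muBB'.
have neq_proper C C' : C \in F -> C' \in F -> mu C = mu C' -> ~~ (C \proper C').
  by move=> FC FC' muCC'; apply/negP => /(mu_incr FC FC'); rewrite muCC' ltnn.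
have [dBB'|[sBB'|sB'B]] := F_laminar FB FB'.
- by move: (disjointFr dBB' eB); rewrite eB'.
- by apply/eqP; rewrite eqEproper sBB' neq_proper.
- by apply/esym/eqP; rewrite eqEproper sB'B neq_proper.
Qed.

Lemma sum_laminar_chain_le (R : realDomainType) (g : nat -> R) (e : U) n :
  (forall B, B \in F -> 0 < mu B <= n)%N -> (forall i, 0 <= g i) ->
  \sum_(B in F | e \in B) g (mu B) <= \sum_(i < n) g i.+1.
Proof.
move=> mu_range g_ge0.
have -> : \sum_(B in F | e \in B) g (mu B) =
    \sum_(B in F | e \in B) \sum_(i < n) (if i.+1 == mu B then g i.+1 else 0).
  apply: eq_bigr => B /andP[FB _]; have /andP[mu_gt0 mu_le] := mu_range B FB.
  have lt_i : ((mu B).-1 < n)%N by rewrite prednK.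
  rewrite -big_mkcond /= (big_pred1 (Ordinal lt_i)).
    by rewrite /= prednK.
  by move=> i /=; rewrite -(inj_eq val_inj) /=; apply/eqP/eqP; lia.
rewrite exchange_big /=; apply: ler_sum => i _; rewrite -big_mkcondr /=.
case: (pickP [pred B | [&& B \in F, e \in B & i.+1 == mu B]]) => [B0|none];
  last first.
  by rewrite big_pred0 // => B /=; rewrite -andbA; exact: none.
move=> /and3P[FB0 eB0 /eqP muB0]; rewrite (big_pred1 B0) // => B /=.
apply/idP/eqP => [/andP[FeB /eqP muB]|->]; last by rewrite FB0 eB0 -muB0 eqxx.
apply: (laminar_chain_mu_inj FeB); first by rewrite inE FB0 eB0.
by rewrite -muB -muB0.
Qed.

End LaminarChain.

(* The left-hand side is e2 x / (1 - 4 x) with e2 = 2 eps and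
   x = e2 / (1 - e2), the sum of the geometric series bounding the budget. *)
Lemma budget_arith (R : realFieldType) (E eps : R) :
  2 <= E -> 0 < eps -> 2 * E * eps <= 1 / 4 ->
  2 * eps * (2 * eps / (1 - 2 * eps)) / (1 - 4 * (2 * eps / (1 - 2 * eps)))
  <= 2 * (2 * E * eps) / (1 - 2 * E * eps) ^+ 3 * eps.
Proof.
move=> E_ge2 eps_gt0; set b := 2 * E * eps => b_le.
have b_ge : 4 * eps <= b.
  rewrite -subr_ge0 (_ : b - 4 * eps = 2 * eps * (E - 2)); last by rewrite /b; ring.
  by rewrite mulr_ge0 ?subr_ge0 //; lra.
have b_lt1 : 0 < 1 - b by lra.
have -> : 2 * eps * (2 * eps / (1 - 2 * eps)) / (1 - 4 * (2 * eps / (1 - 2 * eps)))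
    = (2 * eps) ^+ 2 / (1 - 10 * eps).
  by field; apply/andP; split; apply: lt0r_neq0; lra.
rewrite ler_pdivrMr; last by lra.
have -> : 2 * b / (1 - b) ^+ 3 * eps * (1 - 10 * eps)
    = (2 * eps) ^+ 2 * (E - 5 * b) / (1 - b) ^+ 3.
  by rewrite /b; field; exact: lt0r_neq0.
rewrite ler_pdivlMr ?exprn_gt0 // ler_pM2l ?exprn_gt0 ?mulr_gt0 //.
apply: le_trans (_ : 1 - b <= _); last by lra.
rewrite exprS; apply: ler_piMr; first lra.
by apply: exprn_ile1; lra.
Qed.

Lemma beta_bound_ge1 (R : realFieldType) (b : R) :
  1 / 4 < b -> b < 1 -> 1 <= 2 * b / (1 - b) ^+ 3.
Proof.
move=> b_gt b_lt1; have u_gt0 : 0 < 1 - b by rewrite subr_gt0.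
rewrite ler_pdivlMr ?exprn_gt0 // mul1r.
have u_le : 1 - b <= 3 / 4 by lra.
have u2_le : (1 - b) ^+ 2 <= 9 / 16.
  rewrite expr2; apply: le_trans (ler_pM (ltW u_gt0) (ltW u_gt0) u_le u_le) _.
  by lra.
apply: le_trans (_ : (1 - b) * (9 / 16) <= _); last by lra.
by rewrite exprS; apply: ler_wpM2l; first exact: ltW.
Qed.

Section Budget.
Variables (R : realType) (p : R).
Hypothesis p_lt1 : p < 1.
Local Notation eps := (1 - p).
Local Notation e2 := (2 * (1 - p)).
Local Notation y := ((1 - 2 * (1 - p))^-1).
Local Notation beta := (2 * expR 1 * (1 - p)).
Hypothesis beta_le : beta <= 1 / 4.

Lemma expR1_ge2 : 2 <= expR 1 :> R.
Proof. by have := expR_ge1Dx (1 : R); lra. Qed.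

Lemma eps_le_beta4 : 4 * eps <= beta.
Proof.
rewrite -subr_ge0 (_ : beta - 4 * eps = e2 * (expR 1 - 2)); last by ring.
by rewrite mulr_ge0 ?subr_ge0 ?expR1_ge2 // mulr_ge0 // subr_ge0 ltW.
Qed.

Lemma eps_bounds : 0 < eps /\ 16 * eps <= 1.
Proof. by split; [rewrite subr_gt0 | move: eps_le_beta4 beta_le; lra]. Qed.

Lemma cap_viol_bound_diag_le i :
  cap_viol_bound e2 y i.+1 0 0 <= e2 * (e2 * y) * (4 * (e2 * y)) ^+ i.
Proof.
have [eps_gt0 eps_le] := eps_bounds.
rewrite /cap_viol_bound /viol_bound !subn0.
rewrite (_ : i.+2 + i.+1 - 1 = (i + i).+2)%N; last by lia.
have -> : e2 * (e2 * y) * (4 * (e2 * y)) ^+ i = e2 ^+ i.+2 * y ^+ i.+1 * 4 ^+ i.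
  by rewrite !exprMn !exprS; ring.
apply: ler_wpM2l.
  by apply: mulr_ge0; apply: exprn_ge0; rewrite ?invr_ge0; lra.
by rewrite -natrX ler_nat bin_double_le_exp4.
Qed.

Lemma chain_cap_viol_bound_le (U : finType) (F : {set {set U}})
    (mu : {set U} -> nat) (e : U) :
  laminar F -> (forall B, B \in F -> (0 < mu B)%N) ->
  (forall B B', B \in F -> B' \in F -> B \proper B' -> (mu B < mu B')%N) ->
  \sum_(B in F | e \in B) cap_viol_bound e2 y (mu B) 0 0
  <= 2 * beta / (1 - beta) ^+ 3 * eps.
Proof.
move=> F_laminar mu_gt0 mu_incr.
have [eps_gt0 eps_le] := eps_bounds.
have x_ge0 : 0 <= e2 * y by rewrite mulr_ge0 ?invr_ge0; lra.
have x4_lt1 : 4 * (e2 * y) < 1.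
  by rewrite mulrA ltr_pdivrMr; lra.
set n := (\sum_(B in F) mu B)%N.
have mu_range B : B \in F -> (0 < mu B <= n)%N.
  by move=> FB; rewrite mu_gt0 //= /n (bigD1 B) //= leq_addr.
have q_ge0 i : 0 <= cap_viol_bound e2 y i 0 0.
  by apply: cap_viol_bound_ge0; rewrite ?invf_ge1; lra.
apply: le_trans (sum_laminar_chain_le F_laminar mu_incr e mu_range q_ge0) _.
apply: le_trans (_ : \sum_(i < n) e2 * (e2 * y) * (4 * (e2 * y)) ^+ i <= _).
  by apply: ler_sum => i _; exact: cap_viol_bound_diag_le.
rewrite -mulr_sumr; apply: le_trans (budget_arith expR1_ge2 eps_gt0 beta_le).
apply: ler_wpM2l; first by rewrite mulr_ge0 //; lra.
by apply: geom_sum_le => //; rewrite mulr_ge0.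
Qed.

End Budget.

Unset Implicit Arguments.

Theorem lemma3 (R : realType) (U : finType) (F : {set {set U}})
  (mu : {set U} -> nat) (f : {set U} -> R)
  (tb : {set U} -> {set U} -> {set U} -> U) (p : R) :
  laminar F ->
  (forall B, B \in F -> (0 < mu B)%N) ->
  (forall B B', B \in F -> B' \in F -> B \proper B' -> (mu B < mu B')%N) ->
  nonneg_fun f -> monotone_fun f -> submodular f ->
  valid_tiebreak tb ->
  0 < p < 1 ->
  let beta := 2 * expR 1 * (1 - p) in
  beta < 1 ->
  Exp p (fun H => wsum (sim_w F mu f tb H) (prune F mu (sim_N F mu f tb H)))
  >= (1 - 2 * beta / (1 - beta) ^+ 3)
     * Exp p (fun H => wsum (sim_w F mu f tb H) (sim_N F mu f tb H)).
Proof.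
move=> F_laminar mu_gt0 mu_incr _ f_mono f_sub tbV /andP[p_gt0 p_lt1] beta beta_lt1.
have [beta_le|beta_gt] := lerP beta (1 / 4).
  have [_ eps_le] := eps_bounds p_lt1 beta_le.
  apply: (Exp_wsum_prune_ge tbV f_mono f_sub p_lt1 (_ : 2 * (1 - p) < 1)).
    by lra.
  by move=> e; exact: chain_cap_viol_bound_le.
have wsum_ge0 (T : {set U} -> {set U}) :
    0 <= Exp p (fun H => wsum (sim_w F mu f tb H) (T H)).
  apply: Exp_ge0 => [|H]; first by rewrite !ltW.
  by apply: sumr_ge0 => x _; exact: sim_w_ge0.
apply: le_trans (wsum_ge0 (prune F mu \o sim_N F mu f tb)).
by rewrite mulr_le0_ge0 ?subr_le0 ?beta_bound_ge1 ?(wsum_ge0 (sim_N F mu f tb)).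
Qed.
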